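(* Let $N\ge2$, $I_1,\dots,I_N,R,M$ be positive integers, $I=I_1\cdots I_N$. For a positive integer $b$ define \[ W_{ub}(b)=I+(N+1)\Big(\prod_{k=1}^N\Big\lceil\frac{I_k}{b}\Big\rceil\Big)bR,\quad W_{lb1}=\frac{NIR}{3^{2-1/N}M^{1-1/N}}-M,\quad W_{lb2}=I+\sum_{k=1}^N I_kR-2M . \] Suppose there are constants $\alpha,\beta,\gamma,\delta,\epsilon>0$ with $\alpha<1$, $\beta<\alpha^{1-1/N}$, $\gamma>1+1/N$, $\delta<1+R\sum_k I_k/I$, $\epsilon<3^{-(2-1/N)}$, such that \[ M\ge\Big(\frac{N\alpha^{1/N}}{1-\alpha}\Big)^{\frac{N}{N-1}},\qquad M\ge\Big(\frac{1}{\alpha^{1/N}-\beta^{1/(N-1)}}\Big)^N, \] \[ M\le\Big(\frac{(\frac{N}{N+1}\gamma)^{1/N}-1}{\alpha^{1/N}}\min_{k}I_k\Big)^N,\quad M\le\tfrac12\Big((1-\delta)I+\sum_k I_kR\Big),\quad M\le\Big(\big(3^{-(2-1/N)}-\epsilon\big)NIR\Big)^{\frac{N}{2N-1}} . \] Let $b=\lfloor(\alpha M)^{1/N}\rfloor$. Then $b\ge1$, $b^N+Nb\le M$, and \[ W_{ub}(b)\le\frac{\gamma}{\beta}\Big(I+\frac{NIR}{M^{1-1/N}}\Big)\le \frac{2\gamma}{\beta\min(\delta,\epsilon)}\max(W_{lb1},W_{lb2}), \] with $\max(W_{lb1},W_{lb2})>0$.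
   Context: $W_{ub}(b)$ is the communication cost of the blocked sequential MTTKRP algorithm with block size $b$ (valid when $b^N+Nb\le M$), while $W_{lb1}$ and $W_{lb2}$ are lower bounds on the loads and stores of any sequential MTTKRP algorithm with fast memory size $M$; the claim is a statement purely about these quantities. *)

From Stdlib Require Import Reals Lra Lia List.
Import ListNotations.
Open Scope R_scope.

(* Index set {1,...,N}; the dimensions are given by a function Is : nat -> nat,
   only the values Is 1, ..., Is N matter. *)
Definition prodI (f : nat -> nat) (N : nat) : nat :=
  fold_right Nat.mul 1%nat (map f (seq 1 N)).
Definition sumI (f : nat -> nat) (N : nat) : nat :=
  fold_right Nat.add 0%nat (map f (seq 1 N)).
Definition minI (f : nat -> nat) (N : nat) : nat :=
  fold_right Nat.min (f 1%nat) (map f (seq 1 N)).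

Definition ceil_div (a b : nat) : nat := ((a + b - 1) / b)%nat.

Definition floorN (x : R) : nat := Z.to_nat (Int_part x).

Definition Itot (Is : nat -> nat) (N : nat) : R := INR (prodI Is N).

Definition W_ub (N : nat) (Is : nat -> nat) (Rk b : nat) : R :=
  Itot Is N + INR (N + 1) * INR (prodI (fun k => ceil_div (Is k) b) N)
              * INR b * INR Rk.

Definition W_lb1 (N : nat) (Is : nat -> nat) (Rk M : nat) : R :=
  INR N * Itot Is N * INR Rk
    / (Rpower 3 (2 - 1 / INR N) * Rpower (INR M) (1 - 1 / INR N)) - INR M.

Definition W_lb2 (N : nat) (Is : nat -> nat) (Rk M : nat) : R :=
  Itot Is N + INR (sumI Is N) * INR Rk - 2 * INR M.

From Stdlib Require Import Reals Lra Lia List ZArith.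
Open Scope R_scope.

(* With b = floor((alpha M)^(1/N)) one has b^N <= alpha M, and hM1 gives
   N b <= (1 - alpha) M, whence b^N + N b <= M.  hM2 keeps b above
   beta^(1/(N-1)) M^(1/N), i.e. b^(N-1) >= beta M^(1-1/N), while hM3 keeps b small
   against min I_k, so that prod ceil(I_k/b) b^N <= I (1 + b/min I_k)^N <= I N gamma/(N+1).
   Together these give W_ub(b) <= gamma/beta (I + N I R / M^(1-1/N)).  On the other
   side hM5 makes W_lb1 >= epsilon N I R / M^(1-1/N) and hM4 makes W_lb2 >= delta I,
   and a sum of two numbers is at most twice their maximum. *)

Lemma Rpower_pos x y : 0 < Rpower x y.
Proof. apply exp_pos. Qed.

Lemma Rpower_1_l y : Rpower 1 y = 1.
Proof. unfold Rpower. rewrite ln_1, Rmult_0_r. apply exp_0. Qed.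

Lemma Rpower_lt_1 x y : 0 < x < 1 -> 0 < y -> Rpower x y < 1.
Proof.
  intros hx hy. pose proof (Rlt_Rpower_l x 1 y hy hx) as h.
  now rewrite Rpower_1_l in h.
Qed.

Lemma Rpower_Rpower_inv x p : 0 < x -> 0 < p -> Rpower (Rpower x p) (1 / p) = x.
Proof.
  intros hx hp. rewrite Rpower_mult.
  replace (p * (1 / p)) with 1 by (field; lra). now apply Rpower_1.
Qed.

Lemma Rpower_root_le x y p :
  0 < p -> 0 < x -> 0 < y -> x <= Rpower y p -> Rpower x (1 / p) <= y.
Proof.
  intros hp hx hy hxy. rewrite <- (Rpower_Rpower_inv y p) by lra.
  apply Rle_Rpower_l; [apply Rlt_le, Rdiv_lt_0_compat|split]; lra.
Qed.

Lemma le_Rpower_root x y p :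
  0 < p -> 0 < x -> 0 < y -> Rpower y p <= x -> y <= Rpower x (1 / p).
Proof.
  intros hp hx hy hxy. rewrite <- (Rpower_Rpower_inv y p) at 1 by lra.
  apply Rle_Rpower_l; [apply Rlt_le, Rdiv_lt_0_compat|split]; try lra.
  apply Rpower_pos.
Qed.

Lemma pow_root_le (n : nat) x y :
  (n <> 0)%nat -> 0 < x -> 0 < y -> x <= y ^ n -> Rpower x (1 / INR n) <= y.
Proof.
  intros hn hx hy. rewrite <- Rpower_pow by lra.
  apply Rpower_root_le; auto. now apply lt_0_INR, Nat.neq_0_lt_0.
Qed.

Lemma le_pow_root (n : nat) x y :
  (n <> 0)%nat -> 0 < x -> 0 < y -> y ^ n <= x -> y <= Rpower x (1 / INR n).
Proof.
  intros hn hx hy. rewrite <- Rpower_pow by lra.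
  apply le_Rpower_root; auto. now apply lt_0_INR, Nat.neq_0_lt_0.
Qed.

Lemma pow_Rpower_root (n : nat) z :
  (n <> 0)%nat -> 0 < z -> Rpower z (1 / INR n) ^ n = z.
Proof.
  intros hn hz. rewrite <- Rpower_pow by apply Rpower_pos. rewrite Rpower_mult.
  replace (1 / INR n * INR n) with 1 by (field; now apply not_0_INR).
  now apply Rpower_1.
Qed.

Lemma floorN_spec x : 0 <= x -> INR (floorN x) <= x < INR (floorN x) + 1.
Proof.
  intros hx. destruct (base_Int_part x) as [hle hgt].
  assert (hnn : (0 <= Int_part x)%Z) by (cut (-1 < Int_part x)%Z; [lia|]; apply lt_IZR; lra).
  unfold floorN. rewrite INR_IZR_INZ, Z2Nat.id by exact hnn. lra.
Qed.

Lemma ceil_div_mul_le a b : (ceil_div a b * b <= a + b)%nat.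
Proof.
  unfold ceil_div. rewrite Nat.mul_comm.
  pose proof (Nat.Div0.mul_div_le (a + b - 1) b). lia.
Qed.

Lemma minI_le f N k : (1 <= k <= N)%nat -> (minI f N <= f k)%nat.
Proof.
  intros hk. assert (hin : In k (seq 1 N)) by (apply in_seq; lia).
  unfold minI. revert hin. generalize (f 1%nat) (seq 1 N).
  intros a l; induction l as [|j l IH]; simpl; [tauto|].
  intros [->|hj]; [lia|]. specialize (IH hj). lia.
Qed.

Lemma minI_ge f N c :
  (1 <= N)%nat -> (forall k, (1 <= k <= N)%nat -> (c <= f k)%nat) -> (c <= minI f N)%nat.
Proof.
  intros hN hf. unfold minI.
  assert (h1 : (c <= f 1%nat)%nat) by (apply hf; lia).
  assert (hl : forall k, In k (seq 1 N) -> (c <= f k)%nat)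
    by (intros k; rewrite in_seq; intros; apply hf; lia).
  revert hl. induction (seq 1 N) as [|j l IH]; simpl; intros hl; [lia|].
  assert (c <= f j)%nat by auto. assert (c <= fold_right Nat.min (f 1%nat) (map f l))%nat by auto.
  lia.
Qed.

Lemma prodI_pos f N : (forall k, (1 <= k <= N)%nat -> (0 < f k)%nat) -> (0 < prodI f N)%nat.
Proof.
  intros hf. unfold prodI.
  assert (hl : forall k, In k (seq 1 N) -> (0 < f k)%nat)
    by (intros k; rewrite in_seq; intros; apply hf; lia).
  revert hl. induction (seq 1 N) as [|j l IH]; simpl; intros hl; [lia|].
  apply Nat.mul_pos_pos; auto.
Qed.

Lemma prod_ceil_div_le (f : nat -> nat) (b : nat) (m : R) (l : list nat) :
  0 < m -> (forall k, In k l -> m <= INR (f k)) ->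
  INR (fold_right Nat.mul 1%nat (map (fun k => ceil_div (f k) b) l)) * INR b ^ length l
    <= INR (fold_right Nat.mul 1%nat (map f l)) * (1 + INR b / m) ^ length l.
Proof.
  intros hm. induction l as [|k l IH]; intros hl; simpl; [lra|].
  rewrite !mult_INR.
  assert (hfactor : INR (ceil_div (f k) b) * INR b <= INR (f k) * (1 + INR b / m)).
  { assert (hkm : m <= INR (f k)) by (apply hl; left; reflexivity).
    assert (hceil : INR (ceil_div (f k) b) * INR b <= INR (f k) + INR b).
    { rewrite <- mult_INR, <- plus_INR. apply le_INR, ceil_div_mul_le. }
    assert (INR b <= INR (f k) * (INR b / m)).
    { apply (Rmult_le_reg_r m); [lra|].
      replace (INR (f k) * (INR b / m) * m) with (INR (f k) * INR b) by (field; lra).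
      pose proof (pos_INR b); nra. }
    lra. }
  set (P := INR (fold_right Nat.mul 1%nat (map (fun k => ceil_div (f k) b) l))) in *.
  set (F := INR (fold_right Nat.mul 1%nat (map f l))) in *.
  set (q := 1 + INR b / m) in *.
  replace (INR (ceil_div (f k) b) * P * (INR b * INR b ^ length l))
    with ((INR (ceil_div (f k) b) * INR b) * (P * INR b ^ length l)) by ring.
  replace (INR (f k) * F * (q * q ^ length l)) with ((INR (f k) * q) * (F * q ^ length l)) by ring.
  apply Rmult_le_compat; [| |exact hfactor|].
  - apply Rmult_le_pos; apply pos_INR.
  - apply Rmult_le_pos; [apply pos_INR|apply pow_le, pos_INR].
  - apply IH. intros j hj. apply hl. now right.
Qed.

Lemma prodI_ceil_div_le (f : nat -> nat) (N b : nat) (m : R) :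
  0 < m -> (forall k, (1 <= k <= N)%nat -> m <= INR (f k)) ->
  INR (prodI (fun k => ceil_div (f k) b) N) * INR b ^ N
    <= INR (prodI f N) * (1 + INR b / m) ^ N.
Proof.
  intros hm hf.
  pose proof (prod_ceil_div_le f b m (seq 1 N) hm) as h.
  rewrite length_seq in h. apply h.
  intros k hk. apply hf. apply in_seq in hk. lia.
Qed.

Section BlockSize.

Variables (N M : nat) (alpha : R).
Hypotheses (hN : (2 <= N)%nat) (hM : (0 < M)%nat) (ha0 : 0 < alpha).

Let n := INR N.
Let a := Rpower alpha (1 / n).
Let u := Rpower (INR M) (1 / n).
Let b := floorN (Rpower (alpha * INR M) (1 / n)).

Let hn : 2 <= n.
Proof. unfold n. replace 2 with (INR 2) by reflexivity. apply le_INR; lia. Qed.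

Let hMpos : 0 < INR M.
Proof. now apply lt_0_INR. Qed.

Let hb_spec : a * u - 1 < INR b <= a * u.
Proof.
  unfold a, u, b. rewrite Rpower_mult_distr by lra.
  pose proof (floorN_spec (Rpower (alpha * INR M) (1 / n)) (Rlt_le _ _ (Rpower_pos _ _))).
  lra.
Qed.

Lemma block_size_pow_le : INR b ^ N <= alpha * INR M.
Proof.
  rewrite <- (pow_Rpower_root N (alpha * INR M)) by (lia || nra).
  apply pow_incr. split; [apply pos_INR|]. unfold a, u in hb_spec.
  rewrite Rpower_mult_distr in hb_spec by lra. fold n. lra.
Qed.

Lemma block_size_fits (ha1 : alpha < 1)
  (hM1 : INR M >= Rpower (n * a / (1 - alpha)) (n / (n - 1))) :
  (b ^ N + N * b <= M)%nat.
Proof.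
  set (e := 1 - 1 / n).
  assert (hK : n * a / (1 - alpha) <= Rpower (INR M) e).
  { replace e with (1 / (n / (n - 1))) by (unfold e; field; lra).
    apply le_Rpower_root; try lra.
    - apply Rdiv_lt_0_compat; lra.
    - apply Rdiv_lt_0_compat; [|lra]. apply Rmult_lt_0_compat; [lra|apply Rpower_pos]. }
  assert (hsplit : INR M = Rpower (INR M) e * u).
  { unfold u, e. rewrite <- Rpower_plus. replace (1 - 1 / n + 1 / n) with 1 by ring.
    now rewrite Rpower_1. }
  assert (hlin : n * INR b <= (1 - alpha) * INR M).
  { apply Rle_trans with (n * a * u); [nra|].
    assert (hu : 0 < u) by apply Rpower_pos.
    replace (n * a * u) with ((1 - alpha) * (n * a / (1 - alpha) * u)) by (field; lra).
    rewrite hsplit. apply Rmult_le_compat_l; [lra|]. nra. }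
  apply INR_le. rewrite plus_INR, mult_INR, pow_INR. fold n.
  pose proof block_size_pow_le. lra.
Qed.

Section LowerBound.

Variable beta : R.
Hypotheses (hb0 : 0 < beta) (hb1 : beta < Rpower alpha (1 - 1 / n))
  (hM2 : INR M >= (1 / (a - Rpower beta (1 / (n - 1)))) ^ N).

Let bt := Rpower beta (1 / (n - 1)).

Lemma block_size_ge_linear : bt * u <= INR b.
Proof.
  assert (hbt : bt < a).
  { unfold bt, a. replace (1 / n) with ((1 - 1 / n) * (1 / (n - 1))) by (field; lra).
    rewrite <- Rpower_mult. apply Rlt_Rpower_l; [apply Rdiv_lt_0_compat|split]; lra. }
  assert (hu : 1 / (a - bt) <= u).
  { fold bt in hM2. apply le_pow_root; try lia; try lra. apply Rdiv_lt_0_compat; lra. }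
  assert (0 < a - bt) by lra.
  assert (1 <= u * (a - bt)).
  { apply (Rmult_le_compat_r (a - bt)) in hu; [|lra].
    replace (1 / (a - bt) * (a - bt)) with 1 in hu by (field; lra). lra. }
  lra.
Qed.

Lemma block_size_ge : beta * Rpower (INR M) (1 - 1 / n) <= INR b ^ (N - 1).
Proof.
  apply Rle_trans with ((bt * u) ^ (N - 1)).
  - right. rewrite Rpow_mult_distr, <- !Rpower_pow by apply Rpower_pos.
    unfold bt, u. rewrite !Rpower_mult, minus_INR by lia. fold n. simpl INR.
    replace (1 / (n - 1) * (n - 1)) with 1 by (field; lra).
    replace (1 / n * (n - 1)) with (1 - 1 / n) by (field; lra).
    now rewrite Rpower_1.
  - apply pow_incr. split; [|apply block_size_ge_linear].
    apply Rmult_le_pos; apply Rlt_le, Rpower_pos.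
Qed.

Lemma block_size_pos : (1 <= b)%nat.
Proof.
  pose proof block_size_ge_linear as h.
  assert (0 < bt) by apply Rpower_pos. assert (0 < u) by apply Rpower_pos.
  destruct b; [|lia]. simpl in h. nra.
Qed.

End LowerBound.

Lemma block_size_ratio_pow_le (c m : R) (hc : 1 < c) (hm : 0 < m)
  (hM3 : INR M <= ((Rpower c (1 / n) - 1) / a * m) ^ N) :
  (1 + INR b / m) ^ N <= c.
Proof.
  set (t := Rpower c (1 / n)) in *.
  assert (ht : 1 < t).
  { pose proof (Rlt_Rpower_l 1 c (1 / n) ltac:(apply Rdiv_lt_0_compat; lra) ltac:(lra)) as h.
    now rewrite Rpower_1_l in h. }
  assert (ha : 0 < a) by apply Rpower_pos.
  assert (hu : u <= (t - 1) / a * m).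
  { apply pow_root_le; try lia; try lra.
    apply Rmult_lt_0_compat; [apply Rdiv_lt_0_compat|]; lra. }
  assert (hbm : INR b <= (t - 1) * m).
  { apply Rle_trans with (a * u); [lra|].
    replace ((t - 1) * m) with (a * ((t - 1) / a * m)) by (field; lra).
    apply Rmult_le_compat_l; lra. }
  rewrite <- (pow_Rpower_root N c) by (lia || lra). fold n t.
  apply pow_incr. split.
  - pose proof (pos_INR b).
    assert (0 <= INR b / m) by (apply Rmult_le_pos; [lra|apply Rlt_le, Rinv_0_lt_compat; lra]).
    lra.
  - apply (Rmult_le_reg_r m); [lra|].
    replace ((1 + INR b / m) * m) with (m + INR b) by (field; lra). lra.
Qed.

Lemma block_size_prod_ceil_div_le (Is : nat -> nat) (gamma : R)
  (hIs : forall k, (1 <= k <= N)%nat -> (0 < Is k)%nat) (hg1 : gamma > 1 + 1 / n)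
  (hM3 : INR M <= ((Rpower (n / (n + 1) * gamma) (1 / n) - 1) / a * INR (minI Is N)) ^ N) :
  INR (prodI (fun k => ceil_div (Is k) b) N) * INR b ^ N
    <= Itot Is N * (n / (n + 1) * gamma).
Proof.
  assert (hm : 0 < INR (minI Is N)) by (apply lt_0_INR, (minI_ge Is N 1); [lia|exact hIs]).
  assert (hc : 1 < n / (n + 1) * gamma).
  { replace 1 with (n / (n + 1) * (1 + 1 / n)) at 1 by (field; lra).
    apply Rmult_lt_compat_l; [apply Rdiv_lt_0_compat|]; lra. }
  eapply Rle_trans.
  - apply (prodI_ceil_div_le Is N b _ hm). intros k hk. apply le_INR, minI_le, hk.
  - apply Rmult_le_compat_l; [apply pos_INR|]. now apply block_size_ratio_pow_le.
Qed.

End BlockSize.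

Lemma W_ub_le (N : nat) (Is : nat -> nat) (Rk M b : nat) (beta gamma : R) :
  (1 <= N)%nat -> 0 < beta <= gamma ->
  beta * Rpower (INR M) (1 - 1 / INR N) <= INR b ^ (N - 1) ->
  INR (prodI (fun k => ceil_div (Is k) b) N) * INR b ^ N
    <= Itot Is N * (INR N / (INR N + 1) * gamma) ->
  W_ub N Is Rk b
    <= gamma / beta * (Itot Is N + INR N * Itot Is N * INR Rk
                                    / Rpower (INR M) (1 - 1 / INR N)).
Proof.
  intros hN hbg hge hprod. unfold W_ub.
  set (n := INR N) in *. set (I := Itot Is N) in *. set (RR := INR Rk).
  set (bb := INR b) in *. set (P := INR (prodI (fun k => ceil_div (Is k) b) N)) in *.
  set (Me := Rpower (INR M) (1 - 1 / n)) in *.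
  rewrite plus_INR. fold n. simpl (INR 1).
  assert (hn : 1 <= n) by (unfold n; replace 1 with (INR 1) by reflexivity; apply le_INR; lia).
  assert (hMe : 0 < Me) by apply Rpower_pos.
  assert (hP : 0 <= P) by apply pos_INR.
  assert (hbb : 0 <= bb) by apply pos_INR.
  assert (hI : 0 <= I) by apply pos_INR.
  assert (hRR : 0 <= RR) by apply pos_INR.
  assert (hpow : bb ^ N = bb * bb ^ (N - 1)).
  { replace N with (S (N - 1)) at 1 by lia. reflexivity. }
  assert (hPb : P * bb * (beta * Me) <= I * (n / (n + 1) * gamma)).
  { apply Rle_trans with (P * bb ^ N); [rewrite hpow|exact hprod].
    replace (P * (bb * bb ^ (N - 1))) with (P * bb * bb ^ (N - 1)) by ring.
    apply Rmult_le_compat_l; [nra|exact hge]. }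
  assert (hcost : (n + 1) * P * bb * RR <= gamma / beta * (n * I * RR / Me)).
  { apply (Rmult_le_reg_r (beta * Me)); [nra|].
    replace (gamma / beta * (n * I * RR / Me) * (beta * Me))
      with ((n + 1) * RR * (I * (n / (n + 1) * gamma))) by (field; lra).
    replace ((n + 1) * P * bb * RR * (beta * Me))
      with ((n + 1) * RR * (P * bb * (beta * Me))) by ring.
    apply Rmult_le_compat_l; [nra|exact hPb]. }
  assert (I <= gamma / beta * I).
  { replace I with (1 * I) at 1 by ring. apply Rmult_le_compat_r; [exact hI|].
    apply (Rmult_le_reg_r beta); [lra|]. field_simplify; lra. }
  lra.
Qed.

Lemma W_lb1_ge (N : nat) (Is : nat -> nat) (Rk M : nat) (epsilon : R) :
  (1 <= N)%nat -> (0 < M)%nat -> (0 < Rk)%nat -> 0 < Itot Is N ->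
  epsilon < Rpower 3 (- (2 - 1 / INR N)) ->
  INR M <= Rpower ((Rpower 3 (- (2 - 1 / INR N)) - epsilon) * INR N * Itot Is N * INR Rk)
                  (INR N / (2 * INR N - 1)) ->
  epsilon * (INR N * Itot Is N * INR Rk / Rpower (INR M) (1 - 1 / INR N))
    <= W_lb1 N Is Rk M.
Proof.
  intros hN hM hR hI he hM5. unfold W_lb1.
  set (n := INR N) in *. set (I := Itot Is N) in *. set (RR := INR Rk).
  set (c3 := Rpower 3 (- (2 - 1 / n))) in *.
  set (Me := Rpower (INR M) (1 - 1 / n)).
  assert (hn : 1 <= n) by (unfold n; replace 1 with (INR 1) by reflexivity; apply le_INR; lia).
  assert (hMpos : 0 < INR M) by (apply lt_0_INR; lia).
  assert (hRpos : 0 < RR) by (apply lt_0_INR; lia).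
  assert (hMe : 0 < Me) by apply Rpower_pos.
  assert (hc3 : n * I * RR / (Rpower 3 (2 - 1 / n) * Me) = c3 * (n * I * RR / Me)).
  { unfold c3. rewrite Rpower_Ropp. pose proof (Rpower_pos 3 (2 - 1 / n)). field. lra. }
  rewrite hc3.
  assert (hbase : 0 < (c3 - epsilon) * n * I * RR).
  { apply Rmult_lt_0_compat; [apply Rmult_lt_0_compat; [apply Rmult_lt_0_compat|]|]; lra. }
  assert (hexp : 0 < n / (2 * n - 1)) by (apply Rdiv_lt_0_compat; lra).
  assert (hpow : INR M * Me <= (c3 - epsilon) * n * I * RR).
  { pose proof (Rpower_root_le _ _ _ hexp hMpos hbase hM5) as hroot.
    replace (1 / (n / (2 * n - 1))) with (1 + (1 - 1 / n)) in hroot by (field; lra).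
    rewrite Rpower_plus, Rpower_1 in hroot by lra. exact hroot. }
  assert (INR M <= (c3 - epsilon) * (n * I * RR / Me)).
  { apply (Rmult_le_reg_r Me); [exact hMe|].
    replace ((c3 - epsilon) * (n * I * RR / Me) * Me) with ((c3 - epsilon) * n * I * RR)
      by (field; lra).
    exact hpow. }
  lra.
Qed.

Lemma Rmin_scaled_sum_le_Rmax (g h d e x y w1 w2 : R) :
  0 < g -> 0 < h -> 0 < d -> 0 < e -> 0 <= x -> 0 <= y -> d * x <= w2 -> e * y <= w1 ->
  g / h * (x + y) <= 2 * g / (h * Rmin d e) * Rmax w1 w2.
Proof.
  intros hg hh hd he hx hy h2 h1.
  pose proof (Rmin_l d e). pose proof (Rmin_r d e). pose proof (Rmin_pos d e hd he).
  pose proof (Rmax_l w1 w2). pose proof (Rmax_r w1 w2).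
  assert (hsum : Rmin d e * (x + y) <= 2 * Rmax w1 w2) by nra.
  replace (g / h * (x + y)) with (g / (h * Rmin d e) * (Rmin d e * (x + y))) by (field; lra).
  replace (2 * g / (h * Rmin d e) * Rmax w1 w2)
    with (g / (h * Rmin d e) * (2 * Rmax w1 w2)) by (field; lra).
  apply Rmult_le_compat_l; [|exact hsum].
  apply Rlt_le, Rdiv_lt_0_compat; [lra|]. now apply Rmult_lt_0_compat.
Qed.

Theorem theorem4 (N : nat) (Is : nat -> nat) (Rk M : nat)
  (alpha beta gamma delta epsilon : R)
  (hN : (2 <= N)%nat)
  (hIs : forall k, (1 <= k <= N)%nat -> (0 < Is k)%nat)
  (hR : (0 < Rk)%nat) (hM : (0 < M)%nat)
  (ha0 : 0 < alpha) (hb0 : 0 < beta) (hg0 : 0 < gamma)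
  (hd0 : 0 < delta) (he0 : 0 < epsilon)
  (ha1 : alpha < 1)
  (hb1 : beta < Rpower alpha (1 - 1 / INR N))
  (hg1 : gamma > 1 + 1 / INR N)
  (hd1 : delta < 1 + INR Rk * INR (sumI Is N) / Itot Is N)
  (he1 : epsilon < Rpower 3 (- (2 - 1 / INR N)))
  (hM1 : INR M >= Rpower (INR N * Rpower alpha (1 / INR N) / (1 - alpha))
                         (INR N / (INR N - 1)))
  (hM2 : INR M >= (1 / (Rpower alpha (1 / INR N)
                        - Rpower beta (1 / (INR N - 1)))) ^ N)
  (hM3 : INR M <= ((Rpower (INR N / (INR N + 1) * gamma) (1 / INR N) - 1)
                    / Rpower alpha (1 / INR N) * INR (minI Is N)) ^ N)
  (hM4 : INR M <= / 2 * ((1 - delta) * Itot Is N + INR (sumI Is N) * INR Rk))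
  (hM5 : INR M <= Rpower ((Rpower 3 (- (2 - 1 / INR N)) - epsilon)
                           * INR N * Itot Is N * INR Rk)
                         (INR N / (2 * INR N - 1))) :
  let b := floorN (Rpower (alpha * INR M) (1 / INR N)) in
  (1 <= b)%nat /\
  (b ^ N + N * b <= M)%nat /\
  W_ub N Is Rk b
    <= gamma / beta * (Itot Is N + INR N * Itot Is N * INR Rk
                                    / Rpower (INR M) (1 - 1 / INR N)) /\
  gamma / beta * (Itot Is N + INR N * Itot Is N * INR Rk
                                / Rpower (INR M) (1 - 1 / INR N))
    <= 2 * gamma / (beta * Rmin delta epsilon)
       * Rmax (W_lb1 N Is Rk M) (W_lb2 N Is Rk M) /\
  0 < Rmax (W_lb1 N Is Rk M) (W_lb2 N Is Rk M).
Proof.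
  intros b.
  assert (hn : 2 <= INR N) by (replace 2 with (INR 2) by reflexivity; apply le_INR; lia).
  assert (hinvN : 0 < 1 / INR N < 1).
  { assert (1 / INR N * INR N = 1) by (field; lra).
    split; [apply Rdiv_lt_0_compat|]; nra. }
  assert (hI : 0 < Itot Is N) by (apply lt_0_INR, prodI_pos, hIs).
  assert (hbg : beta <= gamma).
  { pose proof (Rpower_lt_1 alpha (1 - 1 / INR N) ltac:(lra) ltac:(lra)). lra. }
  set (X := INR N * Itot Is N * INR Rk / Rpower (INR M) (1 - 1 / INR N)).
  assert (hX : 0 < X).
  { apply Rdiv_lt_0_compat; [|apply Rpower_pos].
    apply Rmult_lt_0_compat; [apply Rmult_lt_0_compat|apply lt_0_INR]; lra || lia. }
  assert (hW1 : epsilon * X <= W_lb1 N Is Rk M) by (apply W_lb1_ge; auto; lia).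
  assert (hW2 : delta * Itot Is N <= W_lb2 N Is Rk M) by (unfold W_lb2; lra).
  repeat split.
  - now apply (block_size_pos N M alpha hN hM ha0 beta).
  - now apply block_size_fits.
  - apply W_ub_le; [lia|lra|now apply block_size_ge|now apply block_size_prod_ceil_div_le].
  - apply Rmin_scaled_sum_le_Rmax; auto; lra.
  - pose proof (Rmax_r (W_lb1 N Is Rk M) (W_lb2 N Is Rk M)).
    pose proof (Rmult_lt_0_compat _ _ hd0 hI). lra.
Qed.
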